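(* Let $q$ be a nonzero complex number with $q^4\ne1$ and let $\zeta,\zeta'$ be nonzero complex numbers with $\zeta\neq\pm1$, $\zeta'\neq\pm1$, $\zeta\zeta'\neq\pm1$. Then the space of (grading-preserving) $U_q(\mathfrak{sl}(1|1))$-module homomorphisms $V(\zeta)\otimes V(\zeta')\to V(\zeta')\otimes V(\zeta)$ is two-dimensional, spanned by $R_{\zeta,\zeta'}$ and $R'_{\zeta,\zeta'}$, where (with $x,y$ and $x',y'$ the standard bases of $V(\zeta)$, $V(\zeta')$) \[R_{\zeta,\zeta'}:\ x\otimes x'\mapsto x'\otimes x,\ x\otimes y'\mapsto \zeta\, y'\otimes x,\ y\otimes x'\mapsto \zeta' x'\otimes y+(1-\zeta^2)\,y'\otimes x,\ y\otimes y'\mapsto -\zeta\zeta'\, y'\otimes y,\] \[R'_{\zeta,\zeta'}:\ x\otimes x'\mapsto -\zeta\zeta'\,x'\otimes x,\ x\otimes y'\mapsto (1-(\zeta')^2)\,x'\otimes y-\zeta'\,y'\otimes x,\ y\otimes x'\mapsto -\zeta\, x'\otimes y,\ y\otimes y'\mapsto y'\otimes y.\]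
   Context: $[\zeta]=\frac{\zeta-\zeta^{-1}}{q-q^{-1}}$. $U_q(\mathfrak{sl}(1|1))$ is the associative superalgebra generated by odd $E,F$ and even invertible central $W^{\pm1}$ with relations $EF+FE=\frac{W-W^{-1}}{q-q^{-1}}$, $E^2=F^2=0$; it is a Hopf superalgebra with $\Delta(W)=W\otimes W$, $\Delta(E)=E\otimes W^{-1}+1\otimes E$, $\Delta(F)=F\otimes1+W\otimes F$, and tensor products of modules use the sign rule $(a\otimes b)(v\otimes w)=(-1)^{|b||v|}(av\otimes bw)$ for homogeneous elements. For $\zeta\in\mathbb{C}^\times$, $V(\zeta)$ is the $(1|1)$-dimensional module with basis $x$ (even), $y$ (odd) and $Ex=0$, $Fx=y$, $Wx=\zeta x$, $Fy=0$, $Ey=[\zeta]x$, $Wy=\zeta y$. Module homomorphisms are required to preserve the $\mathbb{Z}_2$-grading. *)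

From HB Require Import structures.
From mathcomp Require Import all_boot all_order all_algebra.
From mathcomp Require Import complex reals.
Set Implicit Arguments. Unset Strict Implicit. Unset Printing Implicit Defensive.
Import Order.TTheory GRing.Theory Num.Theory.
Local Open Scope ring_scope.

Section Defs.
Variable (R : realType).
Local Notation C := (R[i])%type.

Definition qbr (q z : C) : C := (z - z^-1) / (q - q^-1).

(* Basis of V(z) indexed by bool: false = x (even), true = y (odd).
   A linear operator is a coefficient function  A out in.               *)
Definition op (T : Type) := T -> T -> C.

Definition actE (q z : C) : op bool := fun o i => if ~~ o && i then qbr q z else 0.
Definition actF : op bool := fun o i => if o && ~~ i then 1 else 0.
Definition actW (z : C) : op bool := fun o i => if o == i then z else 0.
Definition actWinv (z : C) : op bool := fun o i => if o == i then z^-1 else 0.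
Definition id1 : op bool := fun o i => if o == i then 1 else 0.

(* a (x) b on the tensor product, with b homogeneous of parity pb, using
   the sign rule (a (x) b)(v (x) w) = (-1)^{|b||v|} a v (x) b w. *)
Definition tens (pb : bool) (a b : op bool) : op (bool * bool) :=
  fun o i => (if pb && i.1 then -1 else 1) * a o.1 i.1 * b o.2 i.2.

Definition opadd (T : Type) (A B : op T) : op T := fun o i => A o i + B o i.

(* Actions on V(z) (x) V(z') through the coproduct:
   D(E) = E (x) W^-1 + 1 (x) E,  D(F) = F (x) 1 + W (x) F,  D(W^{+-1}) = W^{+-1} (x) W^{+-1}. *)
Definition tE (q z z' : C) := opadd (tens false (actE q z) (actWinv z')) (tens true id1 (actE q z')).
Definition tF (z z' : C) := opadd (tens false actF id1) (tens true (actW z) actF).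
Definition tW (z z' : C) := tens false (actW z) (actW z').
Definition tWinv (z z' : C) := tens false (actWinv z) (actWinv z').

Definition comp (A B : op (bool * bool)) : op (bool * bool) :=
  fun o i => \sum_(k : bool * bool) A o k * B k i.

Definition parity (b : bool * bool) : bool := b.1 (+) b.2.

(* phi : V(z) (x) V(z') -> V(z') (x) V(z); input index (i, i') with i for V(z),
   output index (j', j) with j' for V(z').  Grading-preserving module map. *)
Definition is_hom (q z z' : C) (phi : op (bool * bool)) : Prop :=
  [/\ forall o i, parity o != parity i -> phi o i = 0,
      forall o i, comp phi (tE q z z') o i = comp (tE q z' z) phi o i,
      forall o i, comp phi (tF z z') o i = comp (tF z' z) phi o i,
      forall o i, comp phi (tW z z') o i = comp (tW z' z) phi o i &
      forall o i, comp phi (tWinv z z') o i = comp (tWinv z' z) phi o i].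

Definition Rmap (z z' : C) : op (bool * bool) := fun o i =>
  match i, o with
  | (false, false), (false, false) => 1
  | (false, true), (true, false) => z
  | (true, false), (false, true) => z'
  | (true, false), (true, false) => 1 - z ^+ 2
  | (true, true), (true, true) => - (z * z')
  | _, _ => 0
  end.

Definition Rmap' (z z' : C) : op (bool * bool) := fun o i =>
  match i, o with
  | (false, false), (false, false) => - (z * z')
  | (false, true), (false, true) => 1 - z' ^+ 2
  | (false, true), (true, false) => - z'
  | (true, false), (false, true) => - z
  | (true, true), (true, true) => 1
  | _, _ => 0
  end.

End Defs.

(* A grading-preserving homomorphism phi : V(z) (x) V(z') -> V(z') (x) V(z) is
   determined by phi(x (x) y'), which lies in the odd part spanned by x' (x) y
   and y' (x) x: the F-relations and the E-relations express every other
   matrix entry through these two coordinates, the E-relations needing only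
   [z'] <> 0.  So the space of homomorphisms has dimension at most 2.  A
   direct computation shows that R and R' are homomorphisms; they send
   x (x) y' to z y' (x) x and to (1 - z'^2) x' (x) y - z' y' (x) x, which are
   linearly independent as z (1 - z'^2) <> 0. *)
From Pilot Require Import Defs.
From HB Require Import structures.
From mathcomp Require Import all_boot all_order all_algebra.
From mathcomp Require Import complex reals.
From mathcomp Require Import ring.
Import Order.TTheory GRing.Theory Num.Theory.
Local Open Scope ring_scope.

Lemma big_bool_pair (V : nmodType) (F : bool * bool -> V) :
  \sum_(k : bool * bool) F k =
  F (true, true) + F (true, false) + (F (false, true) + F (false, false)).
Proof.
rewrite (eq_bigr (fun k => F (k.1, k.2))); last by case.
by rewrite -(pair_bigA _ (fun a b => F (a, b))) /= !big_bool.
Qed.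

Section Sl11Homomorphisms.
Variable R : realType.
Local Notation C := R[i].
Implicit Types (q w z a b : C) (A B X phi psi : op R (bool * bool)).

Lemma sub_inv_neq0 w : w != 0 -> w ^+ 2 != 1 -> w - w^-1 != 0.
Proof.
move=> w0; apply: contra => /eqP/subr0_eq ww.
by rewrite expr2 {1}ww mulVf.
Qed.

Lemma qbr_neq0 q w : q != 0 -> q ^+ 2 != 1 -> w != 0 -> w ^+ 2 != 1 -> qbr q w != 0.
Proof.
by move=> q0 q2 w0 w2; rewrite /qbr mulf_neq0 ?invr_eq0 ?sub_inv_neq0.
Qed.

Lemma comp_combl A B X a b o i :
  Defs.comp (fun o i => a * A o i + b * B o i) X o i =
  a * Defs.comp A X o i + b * Defs.comp B X o i.
Proof. by rewrite /Defs.comp !mulr_sumr -big_split; apply: eq_bigr => k _ /=; ring. Qed.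

Lemma comp_combr A B X a b o i :
  Defs.comp X (fun o i => a * A o i + b * B o i) o i =
  a * Defs.comp X A o i + b * Defs.comp X B o i.
Proof. by rewrite /Defs.comp !mulr_sumr -big_split; apply: eq_bigr => k _ /=; ring. Qed.

Lemma is_hom_comb q z z' A B a b :
  is_hom q z z' A -> is_hom q z z' B ->
  is_hom q z z' (fun o i => a * A o i + b * B o i).
Proof.
case=> A_par A_E A_F A_W A_Winv [B_par B_E B_F B_W B_Winv].
split=> o i; rewrite ?comp_combl ?comp_combr.
- by move=> oi; rewrite A_par // B_par // !mulr0 addr0.
- by rewrite A_E B_E.
- by rewrite A_F B_F.
- by rewrite A_W B_W.
- by rewrite A_Winv B_Winv.
Qed.

Lemma is_hom_ext q z z' phi psi :
  (forall o i, phi o i = psi o i) -> is_hom q z z' psi -> is_hom q z z' phi.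
Proof.
move=> phi_psi [par E F W Winv].
have compl X o i : Defs.comp phi X o i = Defs.comp psi X o i.
  by apply: eq_bigr => k _; rewrite phi_psi.
have compr X o i : Defs.comp X phi o i = Defs.comp X psi o i.
  by apply: eq_bigr => k _; rewrite phi_psi.
split=> o i; rewrite ?compl ?compr ?phi_psi;
  [apply: par | apply: E | apply: F | apply: W | apply: Winv].
Qed.

Lemma is_hom_Rcomb q z z' a b : z != 0 -> z' != 0 ->
  is_hom q z z' (fun o i => a * Rmap z z' o i + b * Rmap' z z' o i).
Proof.
move=> z0 z'0; rewrite /is_hom /Defs.comp /tE /tF /tW /tWinv /opadd /tens.
rewrite /actE /actF /actW /actWinv /id1 /qbr.
(* Every E-relation is homogeneous in 1 / (q - q^-1), so no condition on q is needed. *)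
set k := (q - q^-1)^-1.
split=> -[[] []] [[] []]; rewrite ?big_bool_pair /= ?mulr0 ?addr0 //; field; by rewrite ?z0 ?z'0.
Qed.

(* As an input (false, true) is x (x) y'; as an output (false, true) is
   x' (x) y and (true, false) is y' (x) x. *)
Lemma is_hom_eq0 {q z z' psi} : qbr q z' != 0 -> is_hom q z z' psi ->
  psi (false, true) (false, true) = 0 -> psi (true, false) (false, true) = 0 ->
  forall o i, psi o i = 0.
Proof.
move=> qz'0 [psi_par psi_E psi_F _ _] u0 v0.
move: (psi_E (true, true) (false, true)) (psi_E (false, false) (false, true)).
move: (psi_F (false, false) (false, true)) (psi_F (true, true) (false, true)).
move: (psi_F (false, true) (false, false)) (psi_F (true, false) (false, false)).
rewrite /Defs.comp !big_bool_pair /tE /tF /opadd /tens /actE /actF /actW /actWinv /id1 /=.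
rewrite !(mulr0, mul0r, mulr1, mul1r, addr0, add0r, mulN1r, oppr0) u0 v0.
rewrite !(mulr0, mul0r, addr0, add0r).
move=> ft_tf tf_tf ff_tt tt_tt tt_ff ff_ff.
have {tt_ff}tt_ff : psi (true, true) (false, false) = 0.
  by apply: (mulIf qz'0); rewrite mul0r.
have {ff_ff}ff_ff : psi (false, false) (false, false) = 0.
  by apply: (mulIf qz'0); rewrite mul0r.
by case=> -[] [] [[] []]; rewrite ?ft_tf ?tf_tf ?ff_ff ?mulr0 //; apply: psi_par.
Qed.

Lemma Rmap_Rmap'_free z z' a b : z != 0 -> z' ^+ 2 != 1 ->
  (forall o i, a * Rmap z z' o i + b * Rmap' z z' o i = 0) -> a = 0 /\ b = 0.
Proof.
move=> z0 z'2 ab0.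
have z'2' : 1 - z' ^+ 2 != 0 by rewrite subr_eq0 eq_sym.
have b0 : b = 0.
  move: (ab0 (false, true) (false, true)); rewrite /= mulr0 add0r => /eqP.
  by rewrite mulf_eq0 (negbTE z'2') orbF => /eqP.
split=> //; move: (ab0 (true, false) (false, true)); rewrite /= b0 mul0r addr0 => /eqP.
by rewrite mulf_eq0 (negbTE z0) orbF => /eqP.
Qed.

Lemma is_hom_decomp q z z' phi :
  qbr q z' != 0 -> z != 0 -> z' != 0 -> z' ^+ 2 != 1 -> is_hom q z z' phi ->
  exists a b, forall o i, phi o i = a * Rmap z z' o i + b * Rmap' z z' o i.
Proof.
move=> qz'0 z0 z'0 z'2 phi_hom.
have z'2' : 1 - z' ^+ 2 != 0 by rewrite subr_eq0 eq_sym.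
pose b := phi (false, true) (false, true) / (1 - z' ^+ 2).
pose a := (phi (true, false) (false, true) + b * z') / z.
exists a, b => o i.
pose psi o i := 1 * phi o i + -1 * (a * Rmap z z' o i + b * Rmap' z z' o i).
have psi_hom : is_hom q z z' psi.
  by apply: is_hom_comb phi_hom _; apply: is_hom_Rcomb.
suff psi0 : forall o i, psi o i = 0.
  by move/eqP: (psi0 o i); rewrite /psi mul1r mulN1r subr_eq0 => /eqP.
by apply: (is_hom_eq0 qz'0 psi_hom); rewrite /psi /a /b /=; field; rewrite ?z'2' ?z0.
Qed.

End Sl11Homomorphisms.

Theorem theorem5p1 (R : realType) (q z z' : R[i]) :
  q != 0 -> q ^+ 4 != 1 ->
  z != 0 -> z' != 0 ->
  z != 1 -> z != -1 -> z' != 1 -> z' != -1 ->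
  z * z' != 1 -> z * z' != -1 ->
  (forall phi : op R (bool * bool),
      is_hom q z z' phi <->
      exists a b : R[i], forall o i, phi o i = a * Rmap z z' o i + b * Rmap' z z' o i)
  /\
  (forall a b : R[i],
      (forall o i, a * Rmap z z' o i + b * Rmap' z z' o i = 0) -> a = 0 /\ b = 0).
Proof.
move=> q0 q4 z0 z'0 _ _ z'1 z'N1 _ _.
have q2 : q ^+ 2 != 1.
  by apply: contra q4 => /eqP q21; rewrite (_ : 4 = 2 * 2)%N // exprM q21 expr1n.
have z'2 : z' ^+ 2 != 1 by rewrite sqrf_eq1 negb_or z'1.
have qz'0 : qbr q z' != 0 by apply: qbr_neq0.
split; last by move=> a b; apply: Rmap_Rmap'_free.
move=> phi; split; first exact: is_hom_decomp.
by case=> a [b phiE]; apply: is_hom_ext phiE _; apply: is_hom_Rcomb.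
Qed.
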